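(* Consider the nonlinear setting of the context, with nominal trajectory $(z_k,v_k)$, tube radii $\tau_0,\dots,\tau_{T-1}\ge 0$, and scalings $\sigma_k:=\sigma(\tau_k,z_k,v_k)\ge 0$ and nonnegative diagonal matrices $\Upsilon_k$ satisfying the two bounding assumptions stated in the context. Let $\boldsymbol{\Sigma}=\mathrm{blkdiag}(\Xi,\sigma_0 I_{n_x},\dots,\sigma_{T-1}I_{n_x})$ and $\boldsymbol{\Upsilon}=\mathrm{blkdiag}(\Upsilon_0,\dots,\Upsilon_{T-1})$. Let $\boldsymbol{\Phi}$ (blocks $\boldsymbol{\Phi}^{\mathrm{xw}},\boldsymbol{\Phi}^{\mathrm{xe}},\boldsymbol{\Phi}^{\mathrm{uw}},\boldsymbol{\Phi}^{\mathrm{ue}}$) satisfy the causality conditions of the context, and suppose the closed loop is such that for every realization the deviations satisfy $$\begin{bmatrix}\Delta\mathbf{x}\\ \Delta\mathbf{u}\end{bmatrix}=\boldsymbol{\Phi}\begin{bmatrix}\boldsymbol{\delta}\\ \boldsymbol{\varepsilon}\end{bmatrix}.$$ Suppose that for all $k\in\{0,\dots,T-1\}$, all $i\in\{1,\dots,n_c\}$ and all $l\in\{1,\dots,n_x+n_u\}$, $$\Big\| c_i^\top \begin{bmatrix}\boldsymbol{\Phi}^{\mathrm{xw}}_{k}\\ \boldsymbol{\Phi}^{\mathrm{uw}}_{k}\end{bmatrix}\boldsymbol{\Sigma}\Big\|_1+\Big\| c_i^\top \begin{bmatrix}\boldsymbol{\Phi}^{\mathrm{xe}}_{k}\\ \boldsymbol{\Phi}^{\mathrm{ue}}_{k}\end{bmatrix}\boldsymbol{\Upsilon}\Big\|_1+c_i^\top\begin{bmatrix}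 z_k\\ v_k\end{bmatrix}+b_i\le 0,$$ $$\Big\| \hat e_l^\top \begin{bmatrix}\boldsymbol{\Phi}^{\mathrm{xw}}_{k}\\ \boldsymbol{\Phi}^{\mathrm{uw}}_{k}\end{bmatrix}\boldsymbol{\Sigma}\Big\|_1+\Big\| \hat e_l^\top \begin{bmatrix}\boldsymbol{\Phi}^{\mathrm{xe}}_{k}\\ \boldsymbol{\Phi}^{\mathrm{ue}}_{k}\end{bmatrix}\boldsymbol{\Upsilon}\Big\|_1\le \tau_k,$$ where $\hat e_l$ is the $l$-th standard basis vector of $\mathbb{R}^{n_x+n_u}$. Then for every initial state $x_0$ with $x_0-z_0\in\Xi\mathcal{B}^{n_x}$ and every process noise $w_k\in\mathcal{B}^{n_x}$ and measurement noise $e_k\in\mathcal{B}^{n_y}$, the closed-loop trajectory satisfies $\|(x_k-z_k,u_k-v_k)\|_\infty\le\tau_k$ and $(x_k,u_k)\in\mathcal{S}$ for all $k\in\{0,\dots,T-1\}$.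
   Context: Nonlinear system: $x_{k+1}=f(x_k,u_k)+E(x_k)w_k$, with reduced measurements $y^r_{k+1}\in\mathbb{R}^{n_r}$ ($k=0,\dots,T-1$), $f$ twice continuously differentiable, $w_k\in\mathcal{B}^{n_x}$, $e_k\in\mathcal{B}^{n_y}$, where $\mathcal{B}^n=\{z:\|z\|_\infty\le1\}$. Constraint set $\mathcal{S}=\{(x,u): c_i^\top(x,u)+b_i\le0,\ i=1,\dots,n_c\}$. Nominal trajectory: $z_{k+1}=f(z_k,v_k)$; $A_k=\partial f/\partial x(z_k,v_k)$, $B_k=\partial f/\partial u(z_k,v_k)$; linear reduced observation model $h^r(x)=C^r x$. Deviations $\Delta x_k=x_k-z_k$, $\Delta u_k=u_k-v_k$; stacked $\Delta\mathbf{x}=(\Delta x_0,\dots,\Delta x_T)$, $\Delta\mathbf{u}=(\Delta u_0,\dots,\Delta u_{T-1})$. Residuals: $d_k:=\Delta x_{k+1}-A_k\Delta x_k-B_k\Delta u_k$ and $\varepsilon_k:=(y^r_{k+1}-C^r z_k)-C^r\Delta x_k$; $\boldsymbol{\delta}=(\Delta x_0,d_0,\dots,d_{T-1})$, $\boldsymbol{\varepsilon}=(\varepsilon_0,\dots,\varepsilon_{T-1})$. Standing assumptions: $\Delta x_0\in\Xi\mathcal{B}^{n_x}$; for each $k$, whenever $\|(\Delta x_k,\Delta u_k)\|_\infty\le\tau_k$, then for all admissible noise $|d_k|\le \sigma(\tau_k,z_k,v_k)\mathbf{1}$ and $\varepsilon_k\in\Upsilon_k\mathcal{B}^{n_r}$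 (componentwise absolute value; $\mathbf{1}$ the all-ones vector). Block structure: $\boldsymbol{\Phi}^{\mathrm{xw}}$ has $(T+1)\times(T+1)$ blocks ($n_x\times n_x$), $\boldsymbol{\Phi}^{\mathrm{uw}}$ has $T\times(T+1)$ blocks ($n_u\times n_x$), $\boldsymbol{\Phi}^{\mathrm{xe}}$ has $(T+1)\times T$ blocks ($n_x\times n_r$), $\boldsymbol{\Phi}^{\mathrm{ue}}$ has $T\times T$ blocks ($n_u\times n_r$); block rows and columns indexed from $0$; column block $0$ of the w-part corresponds to $\Delta x_0$, column block $j+1$ to $d_j$, column block $j$ of the e-part to $\varepsilon_j$. Causality conditions: $\boldsymbol{\Phi}^{\mathrm{xw}}_{k,j}=0$ and $\boldsymbol{\Phi}^{\mathrm{uw}}_{k,j}=0$ for $j>k$; $\boldsymbol{\Phi}^{\mathrm{xe}}_{k,j}=0$ and $\boldsymbol{\Phi}^{\mathrm{ue}}_{k,j}=0$ for $j\ge k$. $\boldsymbol{\Phi}^{\bullet}_{k}$ denotes block row $k$; $\|\cdot\|_1$ of a row vector is the sum of absolute values. *)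

From HB Require Import structures.
From mathcomp Require Import all_boot all_order all_algebra.
From mathcomp Require Import all_classical all_reals all_analysis.
Set Implicit Arguments. Unset Strict Implicit. Unset Printing Implicit Defensive.
Import Order.TTheory GRing.Theory Num.Theory.
Import numFieldNormedType.Exports.
Local Open Scope ring_scope.

Definition inf_norm (R : realType) n (v : 'cV[R]_n) : R :=
  \big[Num.max/0]_(i < n) `|v i ord0|.

Definition norm1 (R : realType) m (r : 'rV[R]_m) : R :=
  \sum_(j < m) `|r ord0 j|.

Definition vdot (R : realType) n (c v : 'cV[R]_n) : R :=
  ((c^T *m v) ord0 ord0).

Definition in_scaled_ball (R : realType) n m (M : 'M[R]_(n, m)) (v : 'cV[R]_n) :=
  exists b : 'cV[R]_m, inf_norm b <= 1 /\ v = M *m b.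

Definition in_unit_ball (R : realType) n (v : 'cV[R]_n) := inf_norm v <= 1.

Definition nonneg_diag (R : realType) n (M : 'M[R]_n) :=
  (forall i j : 'I_n, i != j -> M i j = 0) /\ (forall i, 0 <= M i i).

Definition C2 (R : realType) (V W : normedModType R) (F : V -> W) :=
  [/\ forall p, differentiable F p,
      forall (v : V) p, differentiable (fun q => 'd F q v) p &
      forall (v w : V), continuous (fun q => 'd (fun q' => 'd F q' v) q w)].

(* The block  Sigma = blkdiag(Xi, sigma_0 I, ..., sigma_{T-1} I): block j *)
Definition Sigma_blk (R : realType) nx (Xi : 'M[R]_nx) (sigma : nat -> R) (j : nat)
  : 'M[R]_nx :=
  if j is j'.+1 then sigma j' *: 1%:M else Xi.

(* residual d_k = Dx_{k+1} - A_k Dx_k - B_k Du_k, with A_k, B_k the partial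
   Jacobians of f at (z_k, v_k) (applied as differentials) *)
Definition resid_d (R : realType) nx nu
  (f : 'cV[R]_nx -> 'cV[R]_nu -> 'cV[R]_nx)
  (z x : nat -> 'cV[R]_nx) (v u : nat -> 'cV[R]_nu) (k : nat) : 'cV[R]_nx :=
  (x k.+1 - z k.+1)
  - 'd (fun xi => f xi (v k)) (z k) (x k - z k)
  - 'd (fun mu => f (z k) mu) (v k) (u k - v k).

Definition resid_eps (R : realType) nx nr (Cr : 'M[R]_(nr, nx))
  (z x : nat -> 'cV[R]_nx) (yr : nat -> 'cV[R]_nr) (k : nat) : 'cV[R]_nr :=
  (yr k.+1 - Cr *m z k) - Cr *m (x k - z k).

(* stacked disturbance delta = (Dx_0, d_0, ..., d_{T-1}): block j *)
Definition delta_blk (R : realType) nx nu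
  (f : 'cV[R]_nx -> 'cV[R]_nu -> 'cV[R]_nx)
  (z x : nat -> 'cV[R]_nx) (v u : nat -> 'cV[R]_nu) (j : nat) : 'cV[R]_nx :=
  if j is j'.+1 then resid_d f z x v u j' else x 0%N - z 0%N.

From HB Require Import structures.
From mathcomp Require Import all_boot all_order all_algebra.
From mathcomp Require Import all_classical all_reals all_analysis.
From mathcomp Require Import lra.
Set Implicit Arguments. Unset Strict Implicit. Unset Printing Implicit Defensive.
Import Order.TTheory GRing.Theory Num.Theory.
Import numFieldNormedType.Exports.
Local Open Scope ring_scope.

(* Induction on the time step k.  If the tube bounds hold before step k, the
   standing assumptions put every block d_j (j < k) of delta in the ball
   sigma_j I B and every eps_j (j < k) in Ups_j B; Delta x_0 lies in Xi B.  By
   causality, row k of (Delta x, Delta u) = Phi (delta, eps) involves only these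
   blocks, so for any row vector r the quantity r (Delta x_k, Delta u_k) is
   bounded by the 1-norms of r Phi_k Sigma and r Phi_k Upsilon (Hoelder for the
   dual pair l1 / l-infinity).  Taking r = e_l^T gives the tube bound at step k,
   and r = c_i^T together with the tightened constraint gives (x_k, u_k) in S. *)

Lemma abs_entry_le_inf_norm (R : realType) n (v : 'cV[R]_n) i :
  `|v i ord0| <= inf_norm v.
Proof. by rewrite /inf_norm (bigD1 i) //= le_max lexx. Qed.

Lemma inf_norm_le (R : realType) n (v : 'cV[R]_n) t :
  0 <= t -> (forall i, `|v i ord0| <= t) -> inf_norm v <= t.
Proof.
move=> t_ge0 v_le; apply: (big_ind (fun y => y <= t)) => //.
by move=> a b ha hb; rewrite ge_max ha hb.
Qed.

Lemma norm1_ge0 (R : realType) m (r : 'rV[R]_m) : 0 <= norm1 r.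
Proof. exact: sumr_ge0. Qed.

Lemma norm_mulmx_unit_ball (R : realType) m (r : 'rV[R]_m) (d : 'cV[R]_m) :
  inf_norm d <= 1 -> `|(r *m d) ord0 ord0| <= norm1 r.
Proof.
move=> d_le1; rewrite mxE /norm1; apply: le_trans (ler_norm_sum _ _ _) _.
apply: ler_sum => i _; rewrite normrM -[leRHS]mulr1 ler_wpM2l //.
by apply: le_trans d_le1; apply: abs_entry_le_inf_norm.
Qed.

Lemma norm_mulmx_scaled_ball (R : realType) m p (r : 'rV[R]_m)
    (S : 'M[R]_(m, p)) (d : 'cV[R]_m) :
  in_scaled_ball S d -> `|(r *m d) ord0 ord0| <= norm1 (r *m S).
Proof. by case=> e [e_le1 ->]; rewrite mulmxA norm_mulmx_unit_ball. Qed.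

Lemma in_scaled_ball_scalar (R : realType) n (s : R) (d : 'cV[R]_n) :
  0 <= s -> (forall i, `|d i ord0| <= s) -> in_scaled_ball (s *: 1%:M) d.
Proof.
move=> s_ge0; have [->|s_neq0] := eqVneq s 0 => d_le.
  exists 0; split; first by apply: inf_norm_le => // i; rewrite mxE normr0.
  apply/matrixP => i j; rewrite mulmx0 mxE ord1.
  by apply/eqP; rewrite -normr_le0 d_le.
exists (s^-1 *: d); split.
  apply: inf_norm_le => // i; rewrite mxE normrM normfV (ger0_norm s_ge0).
  by rewrite ler_pdivrMl ?mulr1 ?lt_def ?s_neq0.
by rewrite -scalemxAl mul1mx scalerA divff // scale1r.
Qed.

Lemma sum_col_mx (R : realType) m1 m2 n (I : finType)
    (A : I -> 'M[R]_(m1, n)) (B : I -> 'M[R]_(m2, n)) :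
  \sum_i col_mx (A i) (B i) = col_mx (\sum_i A i) (\sum_i B i).
Proof.
apply/matrixP => i j; rewrite summxE -(splitK i).
by case: (fintype.split i) => k; rewrite ?col_mxEu ?col_mxEd summxE;
  apply: eq_bigr => l _; rewrite ?col_mxEu ?col_mxEd.
Qed.

Lemma delta_mx_tr_mulmx (R : realType) n (l : 'I_n) (v : 'cV[R]_n) :
  ((delta_mx l ord0 : 'cV[R]_n)^T *m v) ord0 ord0 = v l ord0.
Proof. by rewrite trmx_delta -rowE mxE. Qed.

(* A block that is not yet known to lie in its ball must be multiplied by a
   zero block of the response; this is how causality enters. *)
Lemma norm_mulmx_sum_le (R : realType) p m n (I : finType) (r : 'rV[R]_p)
    (M : I -> 'M[R]_(p, m)) (S : I -> 'M[R]_(m, n)) (d : I -> 'cV[R]_m) :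
  (forall j, M j = 0 \/ in_scaled_ball (S j) (d j)) ->
  `|(r *m \sum_j M j *m d j) ord0 ord0| <= \sum_j norm1 (r *m M j *m S j).
Proof.
move=> Md; rewrite mulmx_sumr summxE; apply: le_trans (ler_norm_sum _ _ _) _.
apply: ler_sum => j _; case: (Md j) => [->|dS].
  by rewrite !(mulmx0, mul0mx) mxE normr0 norm1_ge0.
by rewrite mulmxA norm_mulmx_scaled_ball.
Qed.

Section ClosedLoopTube.

Variables (R : realType) (nx nu nr T : nat).
Variables (f : 'cV[R]_nx -> 'cV[R]_nu -> 'cV[R]_nx) (Cr : 'M[R]_(nr, nx)).
Variables (z : nat -> 'cV[R]_nx) (v : nat -> 'cV[R]_nu).
Variables (Xi : 'M[R]_nx) (tau sigma : nat -> R) (Ups : nat -> 'M[R]_nr).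
Variables (Phixw : 'I_T.+1 -> 'I_T.+1 -> 'M[R]_(nx, nx))
  (Phiuw : 'I_T -> 'I_T.+1 -> 'M[R]_(nu, nx))
  (Phixe : 'I_T.+1 -> 'I_T -> 'M[R]_(nx, nr))
  (Phiue : 'I_T -> 'I_T -> 'M[R]_(nu, nr)).
Variables (x : nat -> 'cV[R]_nx) (u : nat -> 'cV[R]_nu) (yr : nat -> 'cV[R]_nr).

Hypothesis sigma_ge0 : forall k, (k < T)%N -> 0 <= sigma k.
Hypothesis x0_in_ball : in_scaled_ball Xi (x 0%N - z 0%N).
Hypothesis resid_bounds : forall k, (k < T)%N ->
  inf_norm (col_mx (x k - z k) (u k - v k)) <= tau k ->
  (forall i, `|resid_d f z x v u k i ord0| <= sigma k) /\
  in_scaled_ball (Ups k) (resid_eps Cr z x yr k).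
Hypothesis Phixw_causal : forall (k j : 'I_T.+1), (k < j)%N -> Phixw k j = 0.
Hypothesis Phiuw_causal :
  forall (k : 'I_T) (j : 'I_T.+1), (k < j)%N -> Phiuw k j = 0.
Hypothesis Phixe_causal :
  forall (k : 'I_T.+1) (j : 'I_T), (k <= j)%N -> Phixe k j = 0.
Hypothesis Phiue_causal : forall (k j : 'I_T), (k <= j)%N -> Phiue k j = 0.
Hypothesis x_response : forall k : 'I_T.+1,
  x k - z k = \sum_(j < T.+1) Phixw k j *m delta_blk f z x v u j
              + \sum_(j < T) Phixe k j *m resid_eps Cr z x yr j.
Hypothesis u_response : forall k : 'I_T,
  u k - v k = \sum_(j < T.+1) Phiuw k j *m delta_blk f z x v u j
              + \sum_(j < T) Phiue k j *m resid_eps Cr z x yr j.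

Lemma deviation_bound (k : 'I_T) :
  (forall j, (j < k)%N -> inf_norm (col_mx (x j - z j) (u j - v j)) <= tau j) ->
  forall r : 'rV[R]_(nx + nu),
  `|(r *m col_mx (x k - z k) (u k - v k)) ord0 ord0| <=
    \sum_(j < T.+1) norm1 (r *m col_mx (Phixw (widen_ord (leqnSn T) k) j)
                                       (Phiuw k j) *m Sigma_blk Xi sigma j)
    + \sum_(j < T) norm1 (r *m col_mx (Phixe (widen_ord (leqnSn T) k) j)
                                      (Phiue k j) *m Ups j).
Proof.
move=> tube_before r.
have resid_bounds_before j (jk : (j < k)%N) :=
  resid_bounds (ltn_trans jk (ltn_ord k)) (tube_before j jk).
rewrite [x k - z k](x_response (widen_ord (leqnSn T) k)) u_response -add_col_mx -!sum_col_mx.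
under eq_bigr do rewrite -mul_col_mx.
under [X in _ + X]eq_bigr do rewrite -mul_col_mx.
rewrite mulmxDr mxE; apply: le_trans (ler_normD _ _) _.
apply: lerD; apply: norm_mulmx_sum_le => j.
- have [jk|kj] := leqP j k; last by left; rewrite Phixw_causal ?Phiuw_causal ?col_mx0.
  right; case: j jk => [[|j] ?] /= jk; first exact: x0_in_ball.
  exact: in_scaled_ball_scalar (sigma_ge0 _) (resid_bounds_before j jk).1.
- have [jk|kj] := ltnP j k; last by left; rewrite Phixe_causal ?Phiue_causal ?col_mx0.
  by right; exact: (resid_bounds_before j jk).2.
Qed.

Hypothesis tau_ge0 : forall k, (k < T)%N -> 0 <= tau k.
Hypothesis tube_radius_bound : forall (k : 'I_T) (l : 'I_(nx + nu)),
  \sum_(j < T.+1) norm1 ((delta_mx l ord0 : 'cV[R]_(nx + nu))^T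
                         *m col_mx (Phixw (widen_ord (leqnSn T) k) j) (Phiuw k j)
                         *m Sigma_blk Xi sigma j)
  + \sum_(j < T) norm1 ((delta_mx l ord0 : 'cV[R]_(nx + nu))^T
                         *m col_mx (Phixe (widen_ord (leqnSn T) k) j) (Phiue k j)
                         *m Ups j)
  <= tau k.

Lemma deviation_in_tube k : (k < T)%N ->
  inf_norm (col_mx (x k - z k) (u k - v k)) <= tau k.
Proof.
elim/ltn_ind: k => k IH kT; apply: inf_norm_le => [|l]; first exact: tau_ge0.
rewrite -delta_mx_tr_mulmx.
apply: le_trans (tube_radius_bound (Ordinal kT) l).
by apply: (deviation_bound (k := Ordinal kT)) => j jk; apply: IH (ltn_trans jk kT).
Qed.

Lemma constraint_satisfied (k : 'I_T) (c : 'cV[R]_(nx + nu)) (b : R) :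
  \sum_(j < T.+1) norm1 (c^T *m col_mx (Phixw (widen_ord (leqnSn T) k) j)
                                      (Phiuw k j) *m Sigma_blk Xi sigma j)
  + \sum_(j < T) norm1 (c^T *m col_mx (Phixe (widen_ord (leqnSn T) k) j)
                                     (Phiue k j) *m Ups j)
  + vdot c (col_mx (z k) (v k)) + b <= 0 ->
  vdot c (col_mx (x k) (u k)) + b <= 0.
Proof.
move=> tightened.
have -> : col_mx (x k) (u k) = col_mx (z k) (v k) + col_mx (x k - z k) (u k - v k).
  by rewrite add_col_mx; congr col_mx; rewrite addrC subrK.
have dev_le := deviation_bound (fun j jk => deviation_in_tube (ltn_trans jk (ltn_ord k))) c^T.
have le_abs := ler_norm ((c^T *m col_mx (x k - z k) (u k - v k)) ord0 ord0).
rewrite /vdot in tightened *; rewrite mulmxDr mxE; lra.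
Qed.

End ClosedLoopTube.

Theorem proposition3 (R : realType) (nx nu ny nr nc T : nat)
  (f : 'cV[R]_nx -> 'cV[R]_nu -> 'cV[R]_nx)
  (E : 'cV[R]_nx -> 'M[R]_nx)
  (Cr : 'M[R]_(nr, nx))
  (c : 'I_nc -> 'cV[R]_(nx + nu)) (b : 'I_nc -> R)
  (z : nat -> 'cV[R]_nx) (v : nat -> 'cV[R]_nu)
  (Xi : 'M[R]_nx) (tau sigma : nat -> R) (Ups : nat -> 'M[R]_nr)
  (Phixw : 'I_T.+1 -> 'I_T.+1 -> 'M[R]_(nx, nx))
  (Phiuw : 'I_T -> 'I_T.+1 -> 'M[R]_(nu, nx))
  (Phixe : 'I_T.+1 -> 'I_T -> 'M[R]_(nx, nr))
  (Phiue : 'I_T -> 'I_T -> 'M[R]_(nu, nr))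
  (CL : (nat -> 'cV[R]_nx) -> (nat -> 'cV[R]_nu) -> (nat -> 'cV[R]_nx) ->
        (nat -> 'cV[R]_ny) -> (nat -> 'cV[R]_nr) -> Prop) :
  C2 (fun p : 'cV[R]_nx * 'cV[R]_nu => f p.1 p.2) ->
  (forall k, (k < T)%N -> z k.+1 = f (z k) (v k)) ->
  (forall x u w e yr, CL x u w e yr ->
     forall k, (k < T)%N -> x k.+1 = f (x k) (u k) + E (x k) *m w k) ->
  (forall k, (k < T)%N -> 0 <= tau k) ->
  (forall k, (k < T)%N -> 0 <= sigma k) ->
  (forall k, (k < T)%N -> nonneg_diag (Ups k)) ->
  (forall x u w e yr, CL x u w e yr ->
     in_scaled_ball Xi (x 0%N - z 0%N) ->
     (forall k, (k < T)%N -> in_unit_ball (w k)) ->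
     (forall k, (k < T)%N -> in_unit_ball (e k)) ->
     forall k, (k < T)%N ->
       inf_norm (col_mx (x k - z k) (u k - v k)) <= tau k ->
       (forall i, `|resid_d f z x v u k i ord0| <= sigma k) /\
       in_scaled_ball (Ups k) (resid_eps Cr z x yr k)) ->
  (forall (k j : 'I_T.+1), (k < j)%N -> Phixw k j = 0) ->
  (forall (k : 'I_T) (j : 'I_T.+1), (k < j)%N -> Phiuw k j = 0) ->
  (forall (k : 'I_T.+1) (j : 'I_T), (k <= j)%N -> Phixe k j = 0) ->
  (forall (k j : 'I_T), (k <= j)%N -> Phiue k j = 0) ->
  (forall x u w e yr, CL x u w e yr ->
     (forall k : 'I_T.+1,
        x k - z k = \sum_(j < T.+1) Phixw k j *m delta_blk f z x v u j
                    + \sum_(j < T) Phixe k j *m resid_eps Cr z x yr j) /\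
     (forall k : 'I_T,
        u k - v k = \sum_(j < T.+1) Phiuw k j *m delta_blk f z x v u j
                    + \sum_(j < T) Phiue k j *m resid_eps Cr z x yr j)) ->
  (forall (k : 'I_T) (i : 'I_nc),
     \sum_(j < T.+1) norm1 ((c i)^T *m col_mx (Phixw (widen_ord (leqnSn T) k) j)
                                            (Phiuw k j) *m Sigma_blk Xi sigma j)
     + \sum_(j < T) norm1 ((c i)^T *m col_mx (Phixe (widen_ord (leqnSn T) k) j)
                                            (Phiue k j) *m Ups j)
     + vdot (c i) (col_mx (z k) (v k)) + b i <= 0) ->
  (forall (k : 'I_T) (l : 'I_(nx + nu)),
     \sum_(j < T.+1) norm1 ((delta_mx l ord0 : 'cV[R]_(nx + nu))^T
                            *m col_mx (Phixw (widen_ord (leqnSn T) k) j) (Phiuw k j)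
                            *m Sigma_blk Xi sigma j)
     + \sum_(j < T) norm1 ((delta_mx l ord0 : 'cV[R]_(nx + nu))^T
                            *m col_mx (Phixe (widen_ord (leqnSn T) k) j) (Phiue k j)
                            *m Ups j)
     <= tau k) ->
  forall x u w e yr, CL x u w e yr ->
    in_scaled_ball Xi (x 0%N - z 0%N) ->
    (forall k, (k < T)%N -> in_unit_ball (w k)) ->
    (forall k, (k < T)%N -> in_unit_ball (e k)) ->
    forall k, (k < T)%N ->
      inf_norm (col_mx (x k - z k) (u k - v k)) <= tau k /\
      (forall i : 'I_nc, vdot (c i) (col_mx (x k) (u k)) + b i <= 0).
Proof.
(* Smoothness, the dynamics and the shape of Ups only serve to justify the
   standing bounding assumptions, which are taken here as hypotheses. *)
move=> _ _ _ tau_ge0 sigma_ge0 _ resid_bounds Phixw_causal Phiuw_causal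
  Phixe_causal Phiue_causal closed_loop tightened tube_radius_bound
  x u w e yr xuwey x0_in_ball w_bounded e_bounded k kT.
have [x_response u_response] := closed_loop _ _ _ _ _ xuwey.
have resid_bounds_xu := resid_bounds _ _ _ _ _ xuwey x0_in_ball w_bounded e_bounded.
split; first exact: (deviation_in_tube sigma_ge0 x0_in_ball resid_bounds_xu
  Phixw_causal Phiuw_causal Phixe_causal Phiue_causal x_response u_response
  tau_ge0 tube_radius_bound).
move=> i; apply: (constraint_satisfied (k := Ordinal kT) sigma_ge0 x0_in_ball
  resid_bounds_xu Phixw_causal Phiuw_causal Phixe_causal Phiue_causal
  x_response u_response tau_ge0 tube_radius_bound).
exact: tightened.
Qed.
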